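(* Suppose there exist an affine plane $\mathrm{AG}(2,k)$ and a resolvable balanced incomplete block design $\mathrm{RBIBD}(v,k,1)$. Then there exists an $\mathrm{RBIBD}(kv,k,1)$ $\mathcal{D}^*$ such that $1$-$\mathrm{BIG}(\mathcal{D}^* )$ is silver.
   Context: A $2$-$(v,k,\lambda)$ design ($2<k<v$) is a pair $(V,\mathcal{B})$ with $|V|=v$ and $\mathcal{B}$ a collection of $k$-subsets of $V$ (blocks) such that every $2$-subset of $V$ lies in exactly $\lambda$ blocks. A parallel class is a set of blocks partitioning $V$. An $\mathrm{RBIBD}(v,k,\lambda)$ is a $2$-$(v,k,\lambda)$ design whose blocks can be partitioned into parallel classes. An affine plane $\mathrm{AG}(2,n)$ is a $2$-$(n^2,n,1)$ design. The $1$-block intersection graph $1$-$\mathrm{BIG}(\mathcal{D})$ has the blocks as vertices, two blocks adjacent iff they intersect in exactly one element. An $\alpha$-set of a graph is a maximum independent set. Let $G$ be an $r$-regular graph and $c$ a proper $(r+1)$-coloring of $G$. A vertex $x$ is rainbow with respect to $c$ if every one of the $r+1$ colors appears on $N[x]=N(x)\cup\{x\}$. Given an $\alpha$-set $I$, $c$ is silver with respect to $I$ if every $x\in I$ is rainbow; $G$ is silver if it admits a silver coloring with respect to some $\alpha$-set. *)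

From mathcomp Require Import all_boot.
Unset Printing Implicit Defensive.

(* A 2-(n,k,1) design on the point set 'I_n, blocks a set of k-subsets.
   (For lambda = 1 blocks are necessarily distinct, so a set of blocks
   is the same as a collection of blocks.) *)
Definition design2 (n k : nat) (B : {set {set 'I_n}}) : Prop :=
  [/\ 2 < k, k < n,
      forall b, b \in B -> #|b| = k &
      forall x y : 'I_n, x != y ->
        #|[set b in B | (x \in b) && (y \in b)]| = 1].

Definition parallel_class (n : nat) (P : {set {set 'I_n}}) : Prop :=
  partition P [set: 'I_n].

Definition rbibd (n k : nat) (B : {set {set 'I_n}}) : Prop :=
  design2 n k B /\
  exists Pc : {set {set {set 'I_n}}},
    partition Pc B /\ forall P, P \in Pc -> parallel_class n P.

Definition affine_plane (m : nat) (A : {set {set 'I_(m ^ 2)}}) : Prop :=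
  design2 (m ^ 2) m A.

(* The 1-block intersection graph: vertex set B, adjacency = meet in exactly one point. *)
Definition one_big_adj (n : nat) : rel {set 'I_n} :=
  fun b1 b2 => #|b1 :&: b2| == 1.

Section Graph.
Variables (T : finType) (Vx : {set T}) (e : rel T).

Definition regular (r : nat) : Prop :=
  forall x, x \in Vx -> #|[set y in Vx | e x y]| = r.

Definition independent (I : {set T}) : Prop :=
  I \subset Vx /\ forall x y, x \in I -> y \in I -> ~~ e x y.

Definition alpha_set (I : {set T}) : Prop :=
  independent I /\ forall J, independent J -> #|J| <= #|I|.

Definition proper_coloring (m : nat) (c : T -> 'I_m) : Prop :=
  forall x y, x \in Vx -> y \in Vx -> e x y -> c x != c y.

Definition rainbow (m : nat) (c : T -> 'I_m) (x : T) : Prop :=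
  forall col : 'I_m, exists y, [/\ y \in Vx, (y == x) || e x y & c y = col].

Definition silver_coloring (r : nat) (I : {set T}) (c : T -> 'I_r.+1) : Prop :=
  proper_coloring r.+1 c /\ forall x, x \in I -> rainbow r.+1 c x.

Definition silver : Prop :=
  exists r, regular r /\
    exists I, alpha_set I /\ exists c : T -> 'I_r.+1, silver_coloring r I c.
End Graph.

From mathcomp Require Import all_boot zify.
Set Implicit Arguments. Unset Strict Implicit. Unset Printing Implicit Defensive.

(* Take the points V x 'I_k, where V is the point set of the RBIBD(v,k,1). The
   columns {x} x 'I_k form one parallel class. A parallel class G of AG(2,k)
   coordinatises the plane as 'I_k x 'I_k, and every line outside G is the graph
   of a function 'I_k -> 'I_k. A block B of the RBIBD and such a line l lift to
   the block of the points (y, i), y in B, with i the value of l at the position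
   of y in B; lifting a parallel class of the RBIBD along a parallel class of
   AG(2,k) other than G gives a parallel class, so the result is an
   RBIBD(kv,k,1).
   In any resolvable 2-(n,k,1) design with r + 1 parallel classes, a block meets
   each other class in exactly k blocks, one through each of its points, and
   blocks of the same class are disjoint. Hence the 1-block intersection graph
   is kr-regular and every parallel class P0 is a maximum independent set.
   Colour P0 with 0 and split each other class into k colours by a label f;
   the colouring is proper, and it is rainbow on P0 as soon as the k blocks of
   a class meeting a block of P0 get distinct labels. For the columns, labelling
   a lifted block by the position of its line in its parallel class works. *)

Section Partitions.
Variable T : finType.
Implicit Types (P : {set {set T}}) (D b : {set T}).

Lemma trivIset_mem_eq P b1 b2 x : trivIset P -> b1 \in P -> b2 \in P ->
  x \in b1 -> x \in b2 -> b1 = b2.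
Proof. by move=> tI P1 P2 x1 x2; rewrite -(def_pblock tI P1 x1) (def_pblock tI P2 x2). Qed.

Lemma partition_cover P D x : partition P D -> x \in D -> exists2 b, b \in P & x \in b.
Proof.
move=> /cover_partition cPD; rewrite -cPD => xP.
by exists (pblock P x); [apply: pblock_mem | rewrite mem_pblock].
Qed.

Lemma partition_intro P D :
  {in P, forall b, b != set0} -> {in P, forall b, b \subset D} ->
  (forall x, x \in D -> exists2 b, b \in P & x \in b) ->
  (forall b1 b2 x, b1 \in P -> b2 \in P -> x \in b1 -> x \in b2 -> b1 = b2) ->
  partition P D.
Proof.
move=> P_neq0 P_sub D_cov P_uniq; apply/and3P; split.
- apply/eqP/setP => x; apply/bigcupP/idP => [[b Pb xb] | /D_cov[b Pb xb]].
    exact: subsetP (P_sub _ Pb) x xb.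
  by exists b.
- apply/trivIsetP => b1 b2 P1 P2 b12; apply/pred0P => x /=; apply/andP => -[x1 x2].
  by move: b12; rewrite (P_uniq _ _ _ P1 P2 x1 x2) eqxx.
- by apply/negP => /P_neq0; rewrite eqxx.
Qed.

End Partitions.

Section Positions.
Variables (T : finType) (k : nat) (i0 : 'I_k).

(* i0 is a junk value for out-of-range indices, e.g. for x \notin S. *)
Definition pos_in (S : {set T}) (x : T) : 'I_k := insubd i0 (index x (enum S)).

Lemma pos_in_inj (S : {set T}) : #|S| = k -> {in S &, injective (pos_in S)}.
Proof.
move=> cS x y xS yS; have idx_lt z : z \in S -> index z (enum S) < k.
  by move=> zS; rewrite -cS cardE index_mem mem_enum.
move/(congr1 val); rewrite !val_insubd !idx_lt // => e.
by rewrite -(nth_index x (_ : x \in enum S)) ?mem_enum // e nth_index ?mem_enum.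
Qed.

Lemma pos_in_onto (S : {set T}) a : #|S| = k -> exists2 x, x \in S & pos_in S x = a.
Proof.
move=> cS; have onto : [set pos_in S x | x in S] = [set: 'I_k].
  apply/eqP; rewrite eqEcard subsetT cardsT card_ord card_in_imset ?cS ?leqnn //.
  exact: pos_in_inj.
have : a \in [set pos_in S x | x in S] by rewrite onto inE.
by case/imsetP=> x xS ->; exists x.
Qed.

End Positions.

Section LinearSpace.
Variables (T : finType) (A : {set {set T}}).
Hypothesis A_pair : forall x y : T, x != y ->
  #|[set b in A | (x \in b) && (y \in b)]| = 1.

Lemma line_uniq x y l m : x != y -> l \in A -> m \in A ->
  x \in l -> y \in l -> x \in m -> y \in m -> l = m.
Proof.
move=> xy lA mA xl yl xm ym; have /eqP/cards1P[b e] := A_pair xy.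
have : l \in [set b in A | (x \in b) && (y \in b)] by rewrite inE lA xl yl.
have : m \in [set b in A | (x \in b) && (y \in b)] by rewrite inE mA xm ym.
by rewrite e !inE => /eqP-> /eqP->.
Qed.

(* Junk value [set0] when x = y. *)
Definition line x y := odflt set0 [pick m in A | (x \in m) && (y \in m)].

Lemma lineP x y : x != y -> [/\ line x y \in A, x \in line x y & y \in line x y].
Proof.
move=> xy; rewrite /line; case: pickP => [m /andP[mA /andP[xm ym]] //|none].
have /eqP/cards1P[m e] := A_pair xy.
by move: (set11 m); rewrite -e inE none.
Qed.

Lemma meet_line l m x : l \in A -> m \in A -> l != m ->
  x \in l -> x \in m -> l :&: m = [set x].
Proof.
move=> lA mA lm xl xm; apply/setP => y; rewrite !inE.
have [->|yx] := eqVneq y x; first by rewrite xl xm.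
by apply: contraNF lm => /andP[yl ym]; rewrite (line_uniq yx lA mA yl xl ym xm).
Qed.

End LinearSpace.

Section OneBlockIntersectionGraph.
Variables (T : finType) (k : nat) (D : {set {set T}}).
Variables (Pc : {set {set {set T}}}) (P0 : {set {set T}}) (f : {set T} -> 'I_k).
Hypothesis k_gt1 : 1 < k.
Hypothesis card_block : forall b, b \in D -> #|b| = k.
Hypothesis D_pair : forall x y : T, x != y ->
  #|[set b in D | (x \in b) && (y \in b)]| = 1.
Hypothesis Pc_partition : partition Pc D.
Hypothesis Pc_parallel : forall P, P \in Pc -> partition P [set: T].
Hypothesis P0_Pc : P0 \in Pc.
Hypothesis f_inj : forall b Q, b \in P0 -> Q \in Pc -> Q != P0 ->
  {in b &, injective (fun x => f (pblock Q x))}.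

Let adj : rel {set T} := fun b1 b2 => #|b1 :&: b2| == 1.
Local Notation class b := (pblock Pc b).
Local Notation r := #|Pc :\ P0|.

Lemma class_Pc b : b \in D -> class b \in Pc.
Proof. by move=> bD; rewrite pblock_mem // (cover_partition Pc_partition). Qed.

Lemma mem_class b : b \in D -> b \in class b.
Proof. by move=> bD; rewrite mem_pblock (cover_partition Pc_partition). Qed.

Lemma class_block Q b : Q \in Pc -> b \in Q -> b \in D.
Proof. by move=> QPc; apply/subsetP/(partitionS Pc_partition QPc). Qed.

Lemma class_eq Q b : Q \in Pc -> b \in Q -> class b = Q.
Proof. exact: def_pblock (partition_trivIset Pc_partition). Qed.

Lemma adj_irr b : b \in D -> ~~ adj b b.
Proof. by move=> bD; rewrite /adj setIid card_block // neq_ltn k_gt1 orbT. Qed.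

Lemma adj_class b1 b2 : b1 \in D -> b2 \in D -> adj b1 b2 -> class b1 != class b2.
Proof.
move=> D1 D2 a12; apply/eqP => e.
have /set0Pn[x] : b1 :&: b2 != set0 by rewrite -card_gt0 (eqP a12).
rewrite inE => /andP[x1 x2].
have P1 := class_Pc D1; have c2 := mem_class D2; rewrite -e in c2.
have e12 := trivIset_mem_eq (partition_trivIset (Pc_parallel P1)) (mem_class D1) c2 x1 x2.
by move: a12; rewrite e12; apply/negP/adj_irr.
Qed.

Lemma pblock_meet b Q x : b \in D -> Q \in Pc -> Q != class b -> x \in b ->
  [/\ pblock Q x \in Q, x \in pblock Q x & b :&: pblock Q x = [set x]].
Proof.
move=> bD QPc Qb xb; have cQ := cover_partition (Pc_parallel QPc).
have xQ : pblock Q x \in Q by rewrite pblock_mem // cQ inE.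
have xq : x \in pblock Q x by rewrite mem_pblock cQ inE.
split=> //; apply: (meet_line D_pair) xb xq => //; first exact: class_block xQ.
by apply: contraNneq Qb => e; rewrite -(class_eq QPc xQ) -e.
Qed.

Lemma one_big_neighbours b : b \in D ->
  [set y in D | adj b y] = [set pblock z.2 z.1 | z in setX b (Pc :\ class b)].
Proof.
move=> bD; apply/setP => y; rewrite inE; apply/andP/imsetP => [[yD a]|].
  have /cards1P[x ex] := a; have : x \in b :&: y by rewrite ex set11.
  rewrite inE => /andP[xb xy]; exists (x, class y).
    by rewrite !inE xb class_Pc // andbT eq_sym adj_class.
  by rewrite /= (def_pblock (partition_trivIset (Pc_parallel (class_Pc yD))) (mem_class yD) xy).
case=> -[x Q]; rewrite !inE /= => /andP[xb /andP[Qb QPc]] ->.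
have [xQ _ e] := pblock_meet bD QPc Qb xb.
by rewrite (class_block QPc xQ) /adj e cards1.
Qed.

Lemma one_big_neighbours_inj b : b \in D ->
  {in setX b (Pc :\ class b) &, injective (fun z => pblock z.2 z.1)}.
Proof.
move=> bD [x Q] [x' Q']; rewrite !inE /=.
move=> /andP[xb /andP[Qb QPc]] /andP[xb' /andP[Qb' QPc']] e.
have [xQ xq _] := pblock_meet bD QPc Qb xb.
have [xQ' xq' _] := pblock_meet bD QPc' Qb' xb'.
rewrite -e in xQ' xq'.
have eQ : Q = Q' by rewrite -(class_eq QPc xQ) (class_eq QPc' xQ').
subst Q'; case: (eqVneq x x') => [-> //|xx'].
have eb := line_uniq D_pair xx' bD (class_block QPc xQ) xb xb' xq xq'.
by move: Qb; rewrite eb (class_eq QPc xQ) eqxx.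
Qed.

Lemma one_big_regular : regular _ D adj (k * r).
Proof.
move=> b bD; rewrite one_big_neighbours // card_in_imset; last exact: one_big_neighbours_inj.
rewrite cardsX card_block //; congr (_ * _).
have := cardsD1 (class b) Pc; have := cardsD1 P0 Pc.
by rewrite class_Pc // P0_Pc => -> /eqP; rewrite eqn_add2l => /eqP.
Qed.

Lemma independent_disjoint J b1 b2 : independent _ D adj J ->
  b1 \in J -> b2 \in J -> b1 != b2 -> [disjoint b1 & b2].
Proof.
move=> [JD Jind] J1 J2 b12; have D1 := subsetP JD _ J1; have D2 := subsetP JD _ J2.
apply/pred0P => x /=; apply/negbTE/negP => /andP[x1 x2].
by move: (Jind _ _ J1 J2); rewrite /adj (meet_line D_pair D1 D2 b12 x1 x2) cards1.
Qed.

Lemma class_independent Q : Q \in Pc -> independent _ D adj Q.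
Proof.
move=> QPc; have QD := partitionS Pc_partition QPc.
split=> // b1 b2 Q1 Q2; have [<-|b12] := eqVneq b1 b2; first exact/adj_irr/(subsetP QD).
apply: contraNN b12 => a12; have /set0Pn[x] : b1 :&: b2 != set0.
  by rewrite -card_gt0 (eqP a12).
rewrite inE => /andP[x1 x2].
by rewrite (trivIset_mem_eq (partition_trivIset (Pc_parallel QPc)) Q1 Q2 x1 x2).
Qed.

Lemma independent_card J : independent _ D adj J -> #|J| * k <= #|T|.
Proof.
move=> indJ; have JD := indJ.1.
have J_trivI : trivIset J.
  by apply/trivIsetP => b1 b2; apply: independent_disjoint indJ.
have uJ : {in J, forall b : {set T}, #|b| = k} by move=> b /(subsetP JD)/card_block.
rewrite -(card_uniform_partition uJ (_ : partition J (cover J))).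
  exact: max_card.
apply/and3P; split=> //; apply/negP => /(subsetP JD)/card_block.
by rewrite cards0 => k0; move: k_gt1; rewrite -k0.
Qed.

Lemma one_big_alpha_class : alpha_set _ D adj P0.
Proof.
split=> [|J indJ]; first exact: class_independent.
have uP0 : {in P0, forall b : {set T}, #|b| = k}.
  by move=> b /(subsetP (partitionS Pc_partition P0_Pc))/card_block.
rewrite -(@leq_pmul2r k) ?(ltnW k_gt1) //.
by rewrite -(card_uniform_partition uP0 (Pc_parallel P0_Pc)) cardsT independent_card.
Qed.

Local Notation classes := (enum (Pc :\ P0)).
Local Notation idx Q := (index Q classes).

Definition class_coloring (b : {set T}) : 'I_(k * r).+1 :=
  if (b \in D) && (class b != P0) then inord (1 + k * idx (class b) + f b) else ord0.

Lemma idx_lt Q : Q \in Pc -> Q != P0 -> idx Q < r.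
Proof. by move=> QPc QP0; rewrite cardE index_mem mem_enum !inE QP0. Qed.

Lemma class_coloringE b : b \in D -> class b != P0 ->
  val (class_coloring b) = 1 + k * idx (class b) + f b.
Proof.
move=> bD bP0; rewrite /class_coloring bD bP0 /= inordK // ltnS -addnA add1n.
apply: leq_trans (_ : k * (idx (class b)).+1 <= _); last first.
  by rewrite leq_mul2l idx_lt ?class_Pc ?orbT.
by rewrite mulnS addnC ltn_add2r.
Qed.

Lemma class_coloring_P0 b : b \in P0 -> class_coloring b = ord0.
Proof. by move=> bP0; rewrite /class_coloring (class_eq P0_Pc bP0) eqxx andbF. Qed.

Lemma class_coloring_proper : proper_coloring _ D adj (k * r).+1 class_coloring.
Proof.
move=> b1 b2 D1 D2 a12; have c12 := adj_class D1 D2 a12.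
have col0 b : b \in D -> class b = P0 -> val (class_coloring b) = 0.
  by move=> bD e; rewrite /class_coloring bD e eqxx.
have [e1|n1] := eqVneq (class b1) P0; have [e2|n2] := eqVneq (class b2) P0.
- by rewrite e1 e2 eqxx in c12.
- by rewrite -val_eqE (col0 b1) // class_coloringE // -addnA add1n.
- by rewrite -val_eqE (col0 b2) // class_coloringE // -addnA add1n.
rewrite -val_eqE !class_coloringE // -!addnA eqn_add2l.
apply: contra c12 => /eqP /(congr1 (divn^~ k)).
rewrite ![k * _]mulnC !divnMDl ?(ltnW k_gt1) // !divn_small // !addn0 => e.
have m1 : class b1 \in classes by rewrite mem_enum !inE n1 class_Pc.
by rewrite -(nth_index set0 m1) e nth_index // mem_enum !inE n2 class_Pc.
Qed.

(* For the j-th class Q other than P0, the k blocks of Q meeting b carry the k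
   distinct values of f, hence all colours 1 + k j + t. *)
Lemma class_coloring_rainbow b : b \in P0 -> rainbow _ D adj (k * r).+1 class_coloring b.
Proof.
move=> bP0 col; have bD := subsetP (partitionS Pc_partition P0_Pc) _ bP0.
have [col0|col_gt0] := posnP col.
  by exists b; rewrite eqxx class_coloring_P0 //; split=> //; apply: val_inj.
have k_gt0 := ltnW k_gt1.
have m_lt : col.-1 < k * r by rewrite -ltnS prednK.
have j_lt : col.-1 %/ k < r by rewrite ltn_divLR // (mulnC r).
have t_lt : col.-1 %% k < k by rewrite ltn_mod.
set Q := nth set0 classes (col.-1 %/ k).
have QPc0 : Q \in Pc :\ P0 by rewrite -mem_enum mem_nth // -cardE.
have iQ : idx Q = col.-1 %/ k by rewrite index_uniq ?enum_uniq // -cardE.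
move: (QPc0); rewrite !inE => /andP[QP0 QPc].
have f_onto : [set f (pblock Q x) | x in b] = [set: 'I_k].
  apply/eqP; rewrite eqEcard subsetT cardsT card_ord card_in_imset ?card_block ?leqnn //.
  move=> x y xb yb; exact: f_inj bP0 QPc QP0 x y xb yb.
have : Ordinal t_lt \in [set f (pblock Q x) | x in b] by rewrite f_onto inE.
case/imsetP => x xb ft.
have Qb : Q != class b by rewrite (class_eq P0_Pc bP0).
have [xQ _ e] := pblock_meet bD QPc Qb xb.
exists (pblock Q x); split; first exact: class_block xQ.
  by rewrite /adj e cards1 orbT.
apply: val_inj; rewrite class_coloringE ?(class_block QPc xQ) ?(class_eq QPc xQ) // iQ -ft /=.
by rewrite -addnA [k * _]mulnC -divn_eq add1n prednK.
Qed.

Theorem resolvable_one_big_silver : silver _ D adj.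
Proof.
exists (k * r); split; first exact: one_big_regular.
exists P0; split; first exact: one_big_alpha_class.
exists class_coloring; split; first exact: class_coloring_proper.
exact: class_coloring_rainbow.
Qed.

End OneBlockIntersectionGraph.

Section AffinePlane.
Variables (k : nat) (A : {set {set 'I_(k ^ 2)}}).
Hypothesis A_affine : affine_plane k A.

Lemma affine_order_gt2 : 2 < k. Proof. by case: A_affine. Qed.

Lemma card_line l : l \in A -> #|l| = k. Proof. by case: A_affine => _ _ + _ lA; apply. Qed.

Lemma affine_pair (x y : 'I_(k ^ 2)) : x != y ->
  #|[set b in A | (x \in b) && (y \in b)]| = 1.
Proof. by case: A_affine => _ _ _; apply. Qed.

(* The lines through p cover the k^2 - 1 other points, k - 1 at a time. *)
Lemma card_lines_through p : #|[set m in A | p \in m]| = k.+1.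
Proof.
set Lp := [set m in A | p \in m].
have lhs : \sum_(q | q != p) \sum_(m in Lp | q \in m) 1 = (k ^ 2).-1.
  rewrite -[in RHS](card_ord (k ^ 2)) -(cardC1 p) -sum1_card.
  apply: eq_big => [q|q qp]; first by rewrite !inE.
  rewrite sum1_card; transitivity #|[set b in A | (p \in b) && (q \in b)]|.
    by apply: eq_card => m; rewrite unfold_in /= !inE andbA.
  by rewrite affine_pair // eq_sym.
have rhs : \sum_(m in Lp) \sum_(q | (q != p) && (q \in m)) 1 = #|Lp| * k.-1.
  rewrite -sum_nat_const; apply: eq_bigr => m; rewrite inE => /andP[mA pm].
  rewrite sum1_card; transitivity #|m :\ p|.
    by apply: eq_card => q; rewrite unfold_in /= !inE.
  by move: (cardsD1 p m); rewrite pm card_line // add1n => /(congr1 predn) ->.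
have k1_gt0 : 0 < k.-1 by have := affine_order_gt2; case: k => [|[|[]]].
have double_count : #|Lp| * k.-1 = (k ^ 2).-1.
  rewrite -rhs -lhs (exchange_big_dep (mem Lp)) /=; last by move=> q m _ /andP[].
  by apply: eq_bigr => m mL; apply: eq_bigl => q; rewrite mL.
apply/eqP; rewrite -(eqn_pmul2r k1_gt0) double_count.
by apply/eqP; rewrite -mulnn; nia.
Qed.

(* Of the k + 1 lines through p, exactly k meet l (one through each point of l). *)
Lemma playfair l p : l \in A -> p \notin l ->
  #|[set m in A | (p \in m) && [disjoint m & l]]| = 1.
Proof.
move=> lA pl; set Lp := [set m in A | p \in m].
set X := [set m : {set 'I_(k ^ 2)} | [disjoint m & l]].
have pq q : q \in l -> p != q by move=> ql; apply: contraNneq pl => ->.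
have meeting : Lp :\: X = [set line A p q | q in l].
  apply/setP => m; rewrite !inE; apply/andP/imsetP => [[/pred0Pn[q /= /andP[qm ql]]] |].
    case/andP=> mA pm; exists q => //; have [pqA ppq qpq] := lineP affine_pair (pq q ql).
    by apply: (line_uniq affine_pair (pq q ql)).
  case=> q ql ->; have [pqA ppq qpq] := lineP affine_pair (pq q ql).
  by split; [apply/pred0Pn; exists q; rewrite /= qpq | rewrite pqA ppq].
have card_meeting : #|Lp :\: X| = k.
  rewrite meeting card_in_imset ?card_line // => q q' ql ql' e.
  apply/eqP; apply: contraNT pl => qq'.
  have [pqA _ qpq] := lineP affine_pair (pq q ql).
  have [_ ppq' q'pq'] := lineP affine_pair (pq q' ql'); rewrite -e in ppq' q'pq'.
  by rewrite (line_uniq affine_pair qq' lA pqA ql ql' qpq q'pq').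
transitivity #|Lp :&: X|; first by apply: eq_card => m; rewrite !inE andbA.
by have := cardsID X Lp; rewrite card_meeting card_lines_through -[k.+1]add1n => /addIn.
Qed.

Definition parallel_class_of l := [set m in A | (m == l) || [disjoint m & l]].
Local Notation par := parallel_class_of.

Lemma par_line l m : m \in par l -> m \in A.
Proof. by rewrite inE => /andP[]. Qed.

Lemma par_refl l : l \in A -> l \in par l.
Proof. by move=> lA; rewrite inE lA eqxx. Qed.

Lemma par_cover l p : l \in A -> exists2 m, m \in par l & p \in m.
Proof.
move=> lA; have [pl|pl] := boolP (p \in l); first by exists l; rewrite ?par_refl.
have /eqP/cards1P[m e] := playfair lA pl.
have : m \in [set m in A | (p \in m) && [disjoint m & l]] by rewrite e set11.
by rewrite !inE => /andP[mA /andP[pm ml]]; exists m; rewrite // inE mA ml orbT.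
Qed.

Lemma par_uniq l m1 m2 p : l \in A -> m1 \in par l -> m2 \in par l ->
  p \in m1 -> p \in m2 -> m1 = m2.
Proof.
move=> lA; rewrite !inE => /andP[m1A o1] /andP[m2A o2] p1 p2.
have [pl|pl] := boolP (p \in l).
  have on_l (m : {set _}) : p \in m -> (m == l) || [disjoint m & l] -> m = l.
    by move=> pm /orP[/eqP //|/pred0P/(_ p)]; rewrite /= pm pl.
  by rewrite (on_l _ p1 o1) (on_l _ p2 o2).
have off_l (m : {set _}) : p \in m -> (m == l) || [disjoint m & l] -> [disjoint m & l].
  by move=> pm /orP[/eqP e|//]; rewrite -e pm in pl.
have /eqP/cards1P[m e] := playfair lA pl.
have : m1 \in [set m in A | (p \in m) && [disjoint m & l]] by rewrite inE m1A p1 off_l.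
have : m2 \in [set m in A | (p \in m) && [disjoint m & l]] by rewrite inE m2A p2 off_l.
by rewrite e !inE => /eqP-> /eqP->.
Qed.

Lemma partition_par l : l \in A -> partition (par l) [set: 'I_(k ^ 2)].
Proof.
move=> lA; apply: partition_intro => [b /par_line bA | b _ | x _ | ].
- by rewrite -card_gt0 card_line // (ltn_trans _ affine_order_gt2).
- exact: subsetT.
- exact: par_cover.
- by move=> b1 b2 x; apply: par_uniq.
Qed.

Lemma card_par l : l \in A -> #|par l| = k.
Proof.
move=> lA; have := card_uniform_partition (fun m mP => card_line (par_line mP)) (partition_par lA).
rewrite cardsT card_ord => e; apply/eqP.
by rewrite -(@eqn_pmul2r k) ?(ltn_trans _ affine_order_gt2) // -e mulnn.
Qed.

Lemma par_eq l m : l \in A -> m \in par l -> par m = par l.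
Proof.
have sub x y z : z \in A -> x \in par z -> y \in par z -> y \in par x.
  move=> zA xz yz; rewrite inE (par_line yz) /=.
  have [//|yx] := eqVneq y x; apply/pred0P => p /=; apply/negbTE/negP => /andP[py px].
  by rewrite (par_uniq zA yz xz py px) eqxx in yx.
move=> lA ml; have lm := sub _ _ _ lA ml (par_refl lA).
by apply/setP => x; apply/idP/idP => [/(sub _ _ _ (par_line ml) lm)|/(sub _ _ _ lA ml)].
Qed.

End AffinePlane.

Section Coordinates.
Variables (k : nat) (A : {set {set 'I_(k ^ 2)}}) (l0 : {set 'I_(k ^ 2)}).
Variable p0 : 'I_(k ^ 2).
Hypothesis A_affine : affine_plane k A.
Hypothesis l0A : l0 \in A.
Local Notation G := (parallel_class_of A l0).

(* p0 is only a default value for nth. *)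
Definition coord_line (a : 'I_k) := nth set0 (enum G) a.
Definition coord (a i : 'I_k) := nth p0 (enum (coord_line a)) i.

Lemma size_enum_G : size (enum G) = k.
Proof. by rewrite -cardE (card_par A_affine l0A). Qed.

Lemma coord_line_G a : coord_line a \in G.
Proof. by rewrite -mem_enum mem_nth // size_enum_G. Qed.

Lemma coord_line_A a : coord_line a \in A.
Proof. exact: par_line (coord_line_G a). Qed.

Lemma coord_line_inj : injective coord_line.
Proof.
move=> a b /eqP; rewrite /coord_line nth_uniq ?size_enum_G ?enum_uniq //.
by move/eqP/val_inj.
Qed.

Lemma size_enum_coord_line a : size (enum (coord_line a)) = k.
Proof. by rewrite -cardE (card_line A_affine (coord_line_A a)). Qed.

Lemma coord_mem a i : coord a i \in coord_line a.
Proof. by rewrite -mem_enum mem_nth // size_enum_coord_line. Qed.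

Lemma coord_inj a i a' i' : coord a i = coord a' i' -> a = a' /\ i = i'.
Proof.
move=> e; have c' := coord_mem a' i'; rewrite -e in c'.
have trivG := partition_trivIset (partition_par A_affine l0A).
have ea := trivIset_mem_eq trivG (coord_line_G a) (coord_line_G a') (coord_mem a i) c'.
move/coord_line_inj: ea => ea; subst a'; split=> //.
move/eqP: e; rewrite /coord nth_uniq ?size_enum_coord_line ?enum_uniq //.
by move/eqP/val_inj.
Qed.

Lemma coord_onto a p : p \in coord_line a -> exists i, coord a i = p.
Proof.
move=> pa; have lt : index p (enum (coord_line a)) < size (enum (coord_line a)).
  by rewrite index_mem mem_enum.
rewrite size_enum_coord_line in lt.
by exists (Ordinal lt); rewrite /coord nth_index ?mem_enum.
Qed.

Lemma par_coord_line l a i : l \in G -> coord a i \in l -> l = coord_line a.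
Proof.
move=> lG cl; have trivG := partition_trivIset (partition_par A_affine l0A).
exact: trivIset_mem_eq trivG lG (coord_line_G a) cl (coord_mem a i).
Qed.

(* A line not parallel to l0 is the graph of a function 'I_k -> 'I_k. *)
Lemma transversal_coord l a : l \in A -> l \notin G -> exists i, coord a i \in l.
Proof.
move=> lA; rewrite -(par_eq A_affine l0A (coord_line_G a)) inE lA negb_or.
case/andP=> _ /pred0Pn[p /= /andP[pl pa]].
by have [i ci] := coord_onto pa; exists i; rewrite ci.
Qed.

Lemma transversal_coord_uniq l a i i' : l \in A -> l \notin G ->
  coord a i \in l -> coord a i' \in l -> i = i'.
Proof.
move=> lA lG il i'l; apply/eqP; apply: contraNT lG => ii'.
have ne : coord a i != coord a i' by apply: contraNneq ii' => /coord_inj[_ ->].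
have := line_uniq (affine_pair A_affine) ne lA (coord_line_A a) il i'l.
by move=> /(_ (coord_mem a i) (coord_mem a i')) ->; apply: coord_line_G.
Qed.

End Coordinates.

Section Product.
Variables (k v : nat) (A : {set {set 'I_(k ^ 2)}}) (l0 : {set 'I_(k ^ 2)}).
Variables (B0 : {set {set 'I_v}}) (Pc : {set {set {set 'I_v}}}).
Variables (p0 : 'I_(k ^ 2)) (i0 : 'I_k).
Hypothesis A_affine : affine_plane k A.
Hypothesis l0A : l0 \in A.
Hypothesis B0_design : design2 v k B0.
Hypothesis Pc_partition : partition Pc B0.
Hypothesis Pc_parallel : forall P, P \in Pc -> partition P [set: 'I_v].

Local Notation n := (k * v).
Local Notation G := (parallel_class_of A l0).
Local Notation par := (parallel_class_of A).
Local Notation coord := (coord A l0 p0).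
Local Notation transversals := (A :\: G).

Let k_gt2 : 2 < k. Proof. by case: B0_design. Qed.
Let k_gt1 : 1 < k. Proof. exact: ltnW. Qed.
Let k_gt0 : 0 < k. Proof. exact: ltnW. Qed.
Let k_lt_v : k < v. Proof. by case: B0_design. Qed.
Let B0_card B : B \in B0 -> #|B| = k. Proof. by case: B0_design => _ _ + _; apply. Qed.
Let B0_pair : forall x y : 'I_v, x != y ->
  #|[set b in B0 | (x \in b) && (y \in b)]| = 1.
Proof. by case: B0_design. Qed.
Let A_pair := affine_pair A_affine.

Lemma card_pairs : #|{: 'I_v * 'I_k}| = n.
Proof. by rewrite card_prod !card_ord mulnC. Qed.

Definition enc (z : 'I_v * 'I_k) : 'I_n := cast_ord card_pairs (enum_rank z).
Definition dec (p : 'I_n) : 'I_v * 'I_k := enum_val (cast_ord (esym card_pairs) p).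

Lemma encK : cancel enc dec.
Proof. by move=> z; rewrite /enc /dec cast_ordK enum_rankK. Qed.

Lemma decK : cancel dec enc.
Proof. by move=> p; rewrite /enc /dec enum_valK cast_ordKV. Qed.

Local Notation pos := (pos_in i0).

Lemma pos_inj B : B \in B0 -> {in B &, injective (pos B)}.
Proof. by move=> BB0; apply/pos_in_inj/B0_card. Qed.

Definition column (x : 'I_v) : {set 'I_n} := [set p | (dec p).1 == x].
Definition lift (B : {set 'I_v}) (l : {set 'I_(k ^ 2)}) : {set 'I_n} :=
  [set p | ((dec p).1 \in B) && (coord (pos B (dec p).1) (dec p).2 \in l)].

Lemma mem_column z x : (enc z \in column x) = (z.1 == x).
Proof. by rewrite inE encK. Qed.

Lemma mem_lift z B l : (enc z \in lift B l) = (z.1 \in B) && (coord (pos B z.1) z.2 \in l).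
Proof. by rewrite inE encK. Qed.

Lemma transversal_A l : l \in transversals -> l \in A.
Proof. by rewrite inE => /andP[]. Qed.

Lemma transversal_G l : l \in transversals -> l \notin G.
Proof. by rewrite inE => /andP[]. Qed.

Lemma transversal_height l a : l \in transversals -> exists i, coord a i \in l.
Proof.
by move=> lT; apply: (transversal_coord p0 A_affine l0A); rewrite ?transversal_A ?transversal_G.
Qed.

Lemma transversal_height_uniq l a i j : l \in transversals ->
  coord a i \in l -> coord a j \in l -> i = j.
Proof.
by move=> lT; apply: (transversal_coord_uniq A_affine l0A (transversal_A lT) (transversal_G lT)).
Qed.

Lemma par_transversal m l : m \in transversals -> l \in par m -> l \in transversals.
Proof.
move=> mT lm; rewrite inE (par_line lm) andbT; apply: contra (transversal_G mT) => lG.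
rewrite -(par_eq A_affine l0A lG) (par_eq A_affine (transversal_A mT) lm).
exact/par_refl/transversal_A.
Qed.

Lemma card_column x : #|column x| = k.
Proof.
have -> : column x = [set enc (x, i) | i : 'I_k].
  apply/setP => p; rewrite inE; apply/eqP/imsetP => [e|[i _ ->]]; last by rewrite encK.
  by exists (dec p).2; rewrite // -e -surjective_pairing decK.
by rewrite card_imset ?card_ord // => i j /(can_inj encK) [].
Qed.

Lemma lift_base B l : l \in transversals -> [set (dec p).1 | p in lift B l] = B.
Proof.
move=> lT; apply/setP => y; apply/imsetP/idP => [[p] | yB]; first by rewrite inE => /andP[? _] ->.
have [i yi] := transversal_height (pos B y) lT.
by exists (enc (y, i)); rewrite ?encK // mem_lift yB.
Qed.

Lemma card_lift B l : B \in B0 -> l \in transversals -> #|lift B l| = k.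
Proof.
move=> BB0 lT; transitivity #|B|; last exact: B0_card.
rewrite -[in RHS](@lift_base B l lT); symmetry.
apply: card_in_imset => p q; rewrite !inE => /andP[_ hp] /andP[_ hq] e.
rewrite e in hp; have ei := transversal_height_uniq lT hp hq.
by apply: (can_inj decK); rewrite [dec p]surjective_pairing [dec q]surjective_pairing e ei.
Qed.

Definition columns : {set {set 'I_n}} := [set column x | x : 'I_v].
Definition lift_class (P : {set {set 'I_v}}) (K : {set {set 'I_(k ^ 2)}}) : {set {set 'I_n}} :=
  [set lift B l | B in P, l in K].
Definition product_design : {set {set 'I_n}} := columns :|: lift_class B0 transversals.

Lemma column_product x : column x \in product_design.
Proof. by rewrite inE imset_f. Qed.

Lemma lift_product B l : B \in B0 -> l \in transversals -> lift B l \in product_design.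
Proof. by move=> BB0 lT; rewrite inE; apply/orP; right; apply/imset2P; exists B l. Qed.

Lemma product_designP b : b \in product_design ->
  (exists x, b = column x) \/ exists B l, [/\ B \in B0, l \in transversals & b = lift B l].
Proof.
rewrite inE => /orP[/imsetP[x _ ->]|/imset2P[B l BB0 lT ->]]; first by left; exists x.
by right; exists B, l.
Qed.

Lemma card_product_block b : b \in product_design -> #|b| = k.
Proof.
by case/product_designP => [[x ->]|[B [l [BB0 lT ->]]]]; rewrite ?card_column ?card_lift.
Qed.

Lemma product_line z w : z != w ->
  exists2 b0, b0 \in product_design & [/\ enc z \in b0, enc w \in b0 &
    forall b, b \in product_design -> enc z \in b -> enc w \in b -> b = b0].
Proof.
case: z w => [x i] [y j]; have [<-|xy] := eqVneq x y => zw.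
  have ij : i != j by apply: contraNneq zw => ->.
  exists (column x); rewrite ?column_product // !mem_column.
  split=> // b /product_designP[[x' ->]|[B [l [_ lT ->]]]].
    by rewrite !mem_column /= => /eqP->.
  rewrite !mem_lift /= => /andP[_ il] /andP[_ jl].
  by rewrite (transversal_height_uniq lT il jl) eqxx in ij.
have [BB0 xB yB] := lineP B0_pair xy; set B := line B0 x y in BB0 xB yB.
have xy_pos : pos B x != pos B y by apply: contra xy => /eqP/(pos_inj BB0 xB yB)->.
have ne : coord (pos B x) i != coord (pos B y) j.
  by apply: contra xy_pos => /eqP/(coord_inj A_affine l0A)[->].
have [lA il jl] := lineP A_pair ne; set l := line A _ _ in lA il jl.
have lT : l \in transversals.
  rewrite inE lA andbT; apply/negP => lG.
  have := par_coord_line A_affine l0A lG il.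
  rewrite {1}(par_coord_line A_affine l0A lG jl) => /(coord_line_inj A_affine l0A) e.
  by rewrite e eqxx in xy_pos.
exists (lift B l); first exact: lift_product.
split; rewrite ?mem_lift /= ?xB ?yB //.
move=> b /product_designP[[x' ->]|[B' [l' [B'B0 l'T ->]]]].
  by rewrite !mem_column /= => /eqP<- /eqP yx; rewrite yx eqxx in xy.
rewrite !mem_lift /= => /andP[xB' il'] /andP[yB' jl'].
have eB : B' = B by apply: (line_uniq B0_pair xy).
subst B'; by rewrite (line_uniq A_pair ne (transversal_A l'T) lA il' jl' il jl).
Qed.

Lemma product_pair (p q : 'I_n) : p != q ->
  #|[set b in product_design | (p \in b) && (q \in b)]| = 1.
Proof.
move=> pq; have : dec p != dec q by rewrite (can_eq decK).
case/product_line=> b0 b0D; rewrite !decK => -[pb0 qb0 b0_uniq].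
apply/eqP/cards1P; exists b0; apply/setP => b; rewrite in_set1 in_set.
apply/idP/eqP => [/and3P[bD pb qb] | ->]; [exact: b0_uniq | by rewrite b0D pb0 qb0].
Qed.

Lemma design_product : design2 n k product_design.
Proof.
split=> //; last exact: product_pair; last exact: card_product_block.
by rewrite ltn_Pmulr // (ltn_trans _ k_lt_v).
Qed.

Lemma column_neq_lift x B l : l \in transversals -> column x != lift B l.
Proof.
move=> lT; apply/eqP => e.
have on_l i : coord (pos B x) i \in l.
  by move: (mem_column (x, i) x); rewrite eqxx e mem_lift => /andP[].
by move/(congr1 val): (transversal_height_uniq lT (on_l (Ordinal k_gt0)) (on_l (Ordinal k_gt1))).
Qed.

Lemma lift_inj B l B' l' : B \in B0 -> l \in transversals -> B' \in B0 -> l' \in transversals ->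
  lift B l = lift B' l' -> B = B' /\ l = l'.
Proof.
move=> BB0 lT B'B0 l'T e.
have eB : B = B' by rewrite -(@lift_base B l lT) -(@lift_base B' l' l'T) e.
subst B'; split=> //.
have shared a : exists i, coord a i \in l /\ coord a i \in l'.
  have [y yB <-] := pos_in_onto i0 a (B0_card BB0).
  have [i il] := transversal_height (pos B y) lT; exists i; split=> //.
  by move: (mem_lift (y, i) B l'); rewrite -e mem_lift yB il => /esym/andP[].
have [i [il il']] := shared (Ordinal k_gt0); have [j [jl jl']] := shared (Ordinal k_gt1).
have ne : coord (Ordinal k_gt0) i != coord (Ordinal k_gt1) j.
  by apply/eqP => /(coord_inj A_affine l0A)[].
exact: (line_uniq A_pair ne (transversal_A lT) (transversal_A l'T) il jl il' jl').
Qed.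

Definition product_resolution : {set {set {set 'I_n}}} :=
  columns |: [set lift_class P (par m) | P in Pc, m in transversals].

Lemma product_resolutionP X : X \in product_resolution ->
  X = columns \/ exists P m, [/\ P \in Pc, m \in transversals & X = lift_class P (par m)].
Proof.
rewrite !inE => /orP[/eqP->|/imset2P[P m PPc mT ->]]; first by left.
by right; exists P, m.
Qed.

Lemma mem_lift_class P m b : P \in Pc -> m \in transversals -> b \in lift_class P (par m) ->
  exists B l, [/\ B \in P, B \in B0, l \in par m, l \in transversals & b = lift B l].
Proof.
move=> PPc mT /imset2P[B l BP lm ->]; exists B, l; split=> //.
  exact: subsetP (partitionS Pc_partition PPc) _ BP.
exact: par_transversal lm.
Qed.

Lemma partition_columns : partition columns [set: 'I_n].
Proof.
apply: partition_intro => [b /imsetP[x _ ->] | b _ | p _ | b1 b2 p].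
- by rewrite -card_gt0 card_column.
- exact: subsetT.
- by exists (column (dec p).1); rewrite ?imset_f // inE.
- by move=> /imsetP[x _ ->] /imsetP[x' _ ->]; rewrite !inE => /eqP<- /eqP<-.
Qed.

Lemma partition_lift_class P m : P \in Pc -> m \in transversals ->
  partition (lift_class P (par m)) [set: 'I_n].
Proof.
move=> PPc mT; have mA := transversal_A mT.
apply: partition_intro => [b | b _ | p _ | b1 b2 p].
- by case/(mem_lift_class PPc mT)=> B [l [_ BB0 _ lT ->]]; rewrite -card_gt0 card_lift.
- exact: subsetT.
- have [B BP xB] := partition_cover (Pc_parallel PPc) (in_setT (dec p).1).
  have [l lm pl] := par_cover A_affine (coord (pos B (dec p).1) (dec p).2) mA.
  by exists (lift B l); [apply/imset2P; exists B l | rewrite inE xB pl].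
- move=> /imset2P[B l BP lm ->] /imset2P[B' l' B'P l'm ->].
  rewrite !inE => /andP[x1 h1] /andP[x2 h2].
  have eB := trivIset_mem_eq (partition_trivIset (Pc_parallel PPc)) BP B'P x1 x2; subst B'.
  by rewrite (par_uniq A_affine mA lm l'm h1 h2).
Qed.

Lemma parallel_product_resolution X : X \in product_resolution -> parallel_class n X.
Proof.
case/product_resolutionP => [->|[P [m [PPc mT ->]]]]; first exact: partition_columns.
exact: partition_lift_class.
Qed.

Lemma partition_product_resolution : partition product_resolution product_design.
Proof.
apply: partition_intro => [X | X | b | X1 X2 b].
- case/product_resolutionP => [->|[P [m [PPc mT ->]]]].
    by apply/set0Pn; exists (column (Ordinal (ltn_trans k_gt0 k_lt_v))); apply: imset_f.
  have /set0Pn[B BP] := partition_neq0 Pc_partition PPc.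
  by apply/set0Pn; exists (lift B m); apply/imset2P; exists B m; rewrite ?par_refl ?transversal_A.
- case/product_resolutionP => [->|[P [m [PPc mT ->]]]].
    by apply/subsetP => b /imsetP[x _ ->]; apply: column_product.
  by apply/subsetP => b /(mem_lift_class PPc mT)[B [l [_ BB0 _ lT ->]]]; apply: lift_product.
- case/product_designP => [[x ->]|[B [l [BB0 lT ->]]]].
    by exists columns; rewrite ?setU11 ?imset_f.
  exists (lift_class (pblock Pc B) (par l)).
    rewrite !inE; apply/orP; right; apply/imset2P; exists (pblock Pc B) l => //.
    by rewrite pblock_mem // (cover_partition Pc_partition).
  apply/imset2P; exists B l; rewrite ?par_refl ?transversal_A //.
  by rewrite mem_pblock (cover_partition Pc_partition).
- case/product_resolutionP => [->|[P [m [PPc mT ->]]]];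
    case/product_resolutionP => [->|[P' [m' [P'Pc m'T ->]]]] //.
  + move=> /imsetP[x _ ->] /(mem_lift_class P'Pc m'T)[B [l [_ _ _ lT e]]].
    by move: (column_neq_lift x B lT); rewrite e eqxx.
  + move=> /(mem_lift_class PPc mT)[B [l [_ _ _ lT ->]]] /imsetP[x _ e].
    by move: (column_neq_lift x B lT); rewrite e eqxx.
  move=> /(mem_lift_class PPc mT)[B [l [BP BB0 lm lT ->]]].
  move=> /(mem_lift_class P'Pc m'T)[B' [l' [B'P' B'B0 l'm' l'T e]]].
  have [eB el] := lift_inj BB0 lT B'B0 l'T e; subst B' l'.
  have eP := trivIset_mem_eq (partition_trivIset Pc_partition) PPc P'Pc BP B'P'; subst P'.
  by rewrite -(par_eq A_affine (transversal_A mT) lm) (par_eq A_affine (transversal_A m'T) l'm').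
Qed.

Lemma rbibd_product : rbibd n k product_design.
Proof.
split; first exact: design_product.
exists product_resolution; split; first exact: partition_product_resolution.
exact: parallel_product_resolution.
Qed.

Definition lift_line (b : {set 'I_n}) : {set 'I_(k ^ 2)} :=
  odflt set0 [pick l in transversals | [exists B in B0, b == lift B l]].

Lemma lift_lineE B l : B \in B0 -> l \in transversals -> lift_line (lift B l) = l.
Proof.
move=> BB0 lT; rewrite /lift_line; case: pickP => [l' /andP[l'T /existsP[B' /andP[B'B0 /eqP e]]]|].
  by have [_ ->] := lift_inj BB0 lT B'B0 l'T e.
by move/(_ l); rewrite lT /=; move/negbT/existsPn/(_ B); rewrite BB0 eqxx.
Qed.

Definition lift_label (b : {set 'I_n}) : 'I_k :=
  pos_in i0 (par (lift_line b)) (lift_line b).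

Lemma lift_label_inj b Q : b \in columns -> Q \in product_resolution -> Q != columns ->
  {in b &, injective (fun p => lift_label (pblock Q p))}.
Proof.
move=> /imsetP[x _ ->] QR; case/product_resolutionP: QR => [->|[P [m [PPc mT eQ]]]].
  by rewrite eqxx.
move=> _ p q; rewrite !inE => /eqP px /eqP qx; have mA := transversal_A mT.
have partQ := partition_lift_class PPc mT; rewrite -eQ in partQ.
have block_of r : exists B l,
    [/\ B \in P, B \in B0, l \in par m, l \in transversals & pblock Q r = lift B l].
  by apply: mem_lift_class PPc mT _; rewrite -eQ pblock_mem // (cover_partition partQ) inE.
have in_block r : r \in pblock Q r by rewrite mem_pblock (cover_partition partQ) inE.
have [B [l [BP BB0 lm lT ep]]] := block_of p.
have [B' [l' [B'P B'B0 l'm l'T eq]]] := block_of q.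
move: (in_block p) (in_block q); rewrite ep eq !inE px qx.
move=> /andP[xB pl] /andP[xB' ql].
have eB := trivIset_mem_eq (partition_trivIset (Pc_parallel PPc)) BP B'P xB xB'; subst B'.
rewrite /lift_label !lift_lineE // (par_eq A_affine mA lm) (par_eq A_affine mA l'm).
move/(pos_in_inj (card_par A_affine mA) lm l'm) => el; subst l'.
have ei := transversal_height_uniq lT pl ql.
by apply: (can_inj decK); rewrite [dec p]surjective_pairing [dec q]surjective_pairing px qx ei.
Qed.

Lemma silver_product : silver _ product_design (one_big_adj n).
Proof.
apply: (resolvable_one_big_silver (Pc := product_resolution) (P0 := columns) (f := lift_label)).
- exact: k_gt1.
- exact: card_product_block.
- exact: product_pair.
- exact: partition_product_resolution.
- exact: parallel_product_resolution.
- by rewrite !inE eqxx.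
- exact: lift_label_inj.
Qed.

End Product.

Theorem theorem3 (k v : nat) :
  (exists A : {set {set 'I_(k ^ 2)}}, affine_plane k A) ->
  (exists B : {set {set 'I_v}}, rbibd v k B) ->
  exists D : {set {set 'I_(k * v)}},
    rbibd (k * v) k D /\ silver _ D (one_big_adj (k * v)).
Proof.
move=> [A A_affine] [B0 [B0_design [Pc [Pc_partition Pc_parallel]]]].
have k_gt0 : 0 < k by case: B0_design => /ltnW/ltnW.
have p0 : 'I_(k ^ 2) by exists 0; rewrite expn_gt0 k_gt0.
have i0 : 'I_k by exists 0.
have /card_gt0P[l0] : 0 < #|[set m in A | p0 \in m]| by rewrite (card_lines_through A_affine).
rewrite inE => /andP[l0A _].
exists (product_design A l0 B0 p0 i0); split.
- exact: (rbibd_product p0 i0 A_affine l0A B0_design Pc_partition Pc_parallel).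
- exact: (silver_product p0 i0 A_affine l0A B0_design Pc_partition Pc_parallel).
Qed.
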